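(* Let $m\ge 7$ and $r$ be integers with $\lceil\frac{m}{2}\rceil<r<m-2$, and let $\mathcal{B}$ be the primitive, narrow-sense BCH code of length $2^m-1$ and designed distance $2^{m-r}-1$. Then \[\mathcal{R}(r,m)^{*\perp}\subseteq\mathcal{R}(r,m)^*\subset\mathcal{B}.\]
   Context: Let $n=2^m-1$. For a nonnegative integer $s$, $C_{s,n}=\{s2^i\bmod n : i\in\mathbb{N}\}$, $S_n$ is the set of smallest elements of the distinct cyclotomic cosets modulo $n$, $\alpha$ is a primitive $n$th root of unity in $\mathbb{F}_{2^m}$, and $M_s(x)=\prod_{i\in C_{s,n}}(x-\alpha^i)$. $\operatorname{w}_2(s)$ is the number of ones in the binary expansion of $s$. Cyclic codes of length $n$ are ideals of $\mathbb{F}_2[x]/(x^n-1)$ given by generator polynomials. The punctured Reed--Muller code $\mathcal{R}(r,m)^*$ ($r<m$) is the cyclic code of length $n$ with generator polynomial $\prod_{s\in S_n,\,1\le\operatorname{w}_2(s)\le m-r-1}M_s(x)$, and $\mathcal{R}(r,m)^{*\perp}$ is its dual. The primitive, narrow-sense BCH code of length $n$ and designed distance $d$ is the cyclic code with generator polynomial $\prod_{i\in\bigcup_{j=0}^{d-2}C_{1+j,n}}(x-\alpha^i)$. *)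

From HB Require Import structures.
From mathcomp Require Import all_boot all_order all_algebra.
Set Implicit Arguments. Unset Strict Implicit. Unset Printing Implicit Defensive.
Import GRing.Theory.
Local Open Scope ring_scope.

Definition word (n : nat) := 'rV['F_2]_n.

Definition w2 (s : nat) : nat := (\sum_(i < s.+1) odd (s %/ 2 ^ i))%N.

(* Cyclotomic coset C_{s,n} = { s 2^j mod n : j in N }, as a subset of 'I_n.
   Since the multiplicative order of 2 mod odd n is < n, j < n suffices. *)
Definition cyc (n s : nat) : {set 'I_n} :=
  [set i : 'I_n | [exists j : 'I_n, nat_of_ord i == ((s * 2 ^ j) %% n)%N]].

Definition coset_leader (n : nat) (s : 'I_n) : bool :=
  [forall i : 'I_n, (i \in cyc n s) ==> (s <= i)%N].

Definition minpolyM (F : fieldType) (alpha : F) (n s : nat) : {poly F} :=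
  \prod_(i in cyc n s) ('X - (alpha ^+ i)%:P).

Definition wpoly (F : fieldType) (n : nat) (c : word n) : {poly F} :=
  \sum_(i < n) ((nat_of_ord (c 0 i))%:R : F) *: 'X^i.

(* Cyclic code of length n with generator polynomial g: the words c with
   g | c(x) (the ideal <g> of F_2[x]/(x^n-1), words of degree < n). *)
Definition cyclic_code (F : fieldType) (n : nat) (g : {poly F}) : {set word n} :=
  [set c : word n | g %| wpoly F c].

Definition dual_code (n : nat) (C : {set word n}) : {set word n} :=
  [set c : word n | [forall d in C, (\sum_(i < n) c 0 i * d 0 i) == 0]].

Definition RM_gen (F : fieldType) (alpha : F) (r m : nat) : {poly F} :=
  \prod_(s : 'I_(2 ^ m - 1) | coset_leader s && (1 <= w2 s <= m - r - 1)%N)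
     minpolyM alpha (2 ^ m - 1) s.

Definition punctured_RM (F : fieldType) (alpha : F) (r m : nat) :=
  @cyclic_code F (2 ^ m - 1) (RM_gen alpha r m).

Definition BCH_gen (F : fieldType) (alpha : F) (n d : nat) : {poly F} :=
  \prod_(i : 'I_n | [exists j : 'I_(d.-1), i \in cyc n (1 + j)])
     ('X - (alpha ^+ i)%:P).

Definition BCH_code (F : fieldType) (alpha : F) (n d : nat) :=
  @cyclic_code F n (BCH_gen alpha n d).

(* A binary exponent s is read as an m-bit word; multiplying by 2 modulo N = 2^m - 1 rotates
   it, so every cyclotomic coset has a constant binary weight w2, and for 0 < s < N the
   complement N - s has weight m - w2 s. Hence R(r,m)^* is the cyclic code whose zeros are
   the alpha^i with 1 <= w2 i <= m-r-1.

   Codewords are produced by the trace: the word c_x = Tr(a alpha^(t x)) vanishes at alpha^s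
   unless s lies in the coset of N - t. For the dual inclusion, if a dual word c had
   c(alpha^t) <> 0 at a zero alpha^t of R(r,m)^*, its inner product with such a trace word
   (which lies in R(r,m)^* because r > m/2 makes w2 t + w2 s = m impossible) would be
   Tr(a c(alpha^t)), nonzero for a suitable a. For the BCH inclusion, every exponent below
   2^(m-r) - 1 has weight at most m-r-1. It is proper because the trace word attached to
   1 + 2^r, whose weight 2 makes it a zero of R(r,m)^*, avoids all BCH zeros: each rotation
   of 1 + 2^r is at least 2^(m-r). *)
From HB Require Import structures.
From mathcomp Require Import all_boot all_order all_algebra all_field zify.
Set Implicit Arguments. Unset Strict Implicit. Unset Printing Implicit Defensive.

Lemma w2_widen s n : (s < n)%N -> w2 s = (\sum_(i < n) odd (s %/ 2 ^ i))%N.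
Proof.
move=> sn; rewrite /w2 -(subnKC sn) big_split_ord /= [X in (_ = _ + X)%N]big1 ?addn0 //.
move=> i _; rewrite divn_small //.
apply: leq_trans (ltn_expl _ (isT : 1 < 2)) _.
by rewrite leq_exp2l // addSn ltnW // ltnS leq_addr.
Qed.

Lemma w2_bit_double (b : bool) a : w2 (b + a.*2) = (b + w2 a)%N.
Proof.
have h1 : (b + a.*2 < (b + a.*2).+2)%N by [].
have h2 : (a < (b + a.*2).+1)%N by rewrite ltnS -addnn addnA leq_addl.
rewrite (w2_widen h1) (w2_widen h2) big_ord_recl /= expn0 divn1 oddD odd_double addbF.
congr (_ + _)%N; first by case: b {h1 h2}.
apply: eq_bigr => i _; rewrite /bump /= add1n expnS divnMA.
suff -> : ((b + a.*2) %/ 2 = a)%N by [].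
by rewrite -muln2 divnDMl // divn_small ?add0n // ltnS leq_b1.
Qed.

Lemma w2_0 : w2 0 = 0%N. Proof. by rewrite /w2 big_ord1. Qed.
Lemma w2_1 : w2 1 = 1%N. Proof. by have := w2_bit_double true 0; rewrite w2_0. Qed.
Lemma w2_double a : w2 a.*2 = w2 a. Proof. exact: (w2_bit_double false a). Qed.

Lemma w2_shift_add k h l : (l < 2 ^ k)%N -> w2 (2 ^ k * h + l) = (w2 h + w2 l)%N.
Proof.
elim: k l => [|k IH] l.
  by rewrite expn0 ltnS leqn0 => /eqP ->; rewrite mul1n addn0 w2_0 addn0.
move=> lk; rewrite [l in LHS](divn_eq l 2) modn2.
have -> : (2 ^ k.+1 * h + (l %/ 2 * 2 + odd l) = odd l + (2 ^ k * h + l %/ 2).*2)%N.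
  by rewrite expnSr -!muln2; lia.
rewrite w2_bit_double IH; last by rewrite ltn_divLR // -expnSr.
by rewrite [l in RHS](divn_eq l 2) modn2 muln2 (addnC _ (odd l)) w2_bit_double; lia.
Qed.

Lemma w2_add_compl k x : (x < 2 ^ k)%N -> (w2 x + w2 (2 ^ k - 1 - x))%N = k.
Proof.
elim: k x => [|k IH] x.
  by rewrite expn0 ltnS leqn0 => /eqP ->; rewrite w2_0.
move=> xk; have xk' : (x %/ 2 < 2 ^ k)%N by rewrite ltn_divLR // -expnSr.
have -> : (2 ^ k.+1 - 1 - x = ~~ odd x + (2 ^ k - 1 - x %/ 2).*2)%N.
  by rewrite [x in LHS](divn_eq x 2) modn2 expnS -!muln2; case: (odd x) => /=; lia.
rewrite [x in w2 x](divn_eq x 2) modn2 muln2 (addnC _ (odd x)) !w2_bit_double.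
by have := IH _ xk'; case: (odd x) => /=; lia.
Qed.

Lemma w2_gt0 x : (0 < x)%N -> (0 < w2 x)%N.
Proof.
elim/ltn_ind: x => x IH x0.
rewrite [x in w2 x](divn_eq x 2) modn2 addnC muln2 w2_bit_double.
case ox: (odd x) => //=; rewrite add0n; apply: IH.
  by rewrite ltn_divLR // ltn_Pmulr.
by rewrite divn_gt0 //; move: x0 ox; case: x => [|[|x]].
Qed.

Section Cyclotomic.
Variable m : nat.
Hypothesis m2 : (2 <= m)%N.
Local Notation N := (2 ^ m - 1)%N.

Lemma N_gt1 : (1 < N)%N.
Proof.
have : (2 ^ 2 <= 2 ^ m)%N by rewrite leq_exp2l.
by rewrite (_ : 2 ^ 2 = 4)%N //; lia.
Qed.

Lemma m_lt_N : (m < N)%N.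
Proof.
suff : (m.+1 < 2 ^ m)%N by lia.
elim: m m2 => [|k IH] //; case: k IH => [|[|k]] IH _ //.
by rewrite expnS; have := IH isT; lia.
Qed.

Lemma expnM_modN e : (2 ^ (e * m) = 1 %[mod N])%N.
Proof.
have pow_m : (2 ^ m = 1 + N)%N by have := N_gt1; lia.
by rewrite mulnC expnM -modnXm {1}pow_m modnDr modnXm exp1n.
Qed.

Lemma rot_modm x e : (x * 2 ^ e %% N = x * 2 ^ (e %% m) %% N)%N.
Proof.
rewrite [e in LHS](divn_eq e m) expnD mulnA -mulnA (mulnC (2 ^ _)) mulnA.
by rewrite -modnMmr expnM_modN modnMmr muln1.
Qed.

Lemma cycP (i : 'I_N) s : reflect (exists e, nat_of_ord i = s * 2 ^ e %% N)%N (i \in cyc N s).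
Proof.
rewrite inE; apply: (iffP existsP) => [[j /eqP ->]|[e ->]]; first by exists j.
have em : (e %% m < N)%N by apply: ltn_trans m_lt_N; rewrite ltn_mod; lia.
by exists (Ordinal em); rewrite /= rot_modm.
Qed.

Lemma rot_trans i s u a b :
  i = (s * 2 ^ a %% N)%N -> s = (u * 2 ^ b %% N)%N -> i = (u * 2 ^ (b + a) %% N)%N.
Proof. by move=> -> ->; rewrite modnMml expnD mulnA. Qed.

Lemma rot_sym x y e : (y < N)%N -> x = (y * 2 ^ e %% N)%N -> y = (x * 2 ^ (e * m - e) %% N)%N.
Proof.
move=> yN ->; rewrite modnMml -mulnA -expnD subnKC; last by rewrite leq_pmulr; lia.
by rewrite -modnMmr expnM_modN modnMmr muln1 modn_small.
Qed.

Lemma w2_rot1 x : (x < N)%N -> w2 (x * 2 %% N) = w2 x.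
Proof.
move=> xN; set P := (2 ^ m.-1)%N.
have e2 : (2 ^ m = P * 2)%N by rewrite /P -expnSr prednK //; lia.
have P1 : (1 < P)%N by rewrite -(expn0 2) ltn_exp2l //; lia.
rewrite [x in LHS](divn_eq x P) [x in RHS](divn_eq x P).
have lP : (x %% P < P)%N by rewrite ltn_mod; lia.
have hP : (x %/ P < 2)%N by rewrite ltn_divLR; lia.
move: (divn_eq x P) lP hP; set h := (x %/ P)%N; set l := (x %% P)%N => xe lP hP.
case: h hP xe => [|[|//]] _ xe.
  rewrite mul0n add0n modn_small; last by rewrite e2 in xN; lia.
  by rewrite muln2 w2_double.
have -> : ((1 * P + l) * 2 = (1 + l.*2) + N)%N by rewrite e2 -muln2; lia.
rewrite modnDr modn_small; last by rewrite e2 in xN *; lia.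
by rewrite (w2_bit_double true) mul1n -(muln1 P) w2_shift_add // w2_1.
Qed.

Lemma w2_rot x e : (x < N)%N -> w2 (x * 2 ^ e %% N) = w2 x.
Proof.
move=> xN; elim: e => [|e IH]; first by rewrite expn0 muln1 modn_small.
by rewrite expnSr mulnA -modnMml w2_rot1 // ltn_mod; lia.
Qed.

Lemma w2_cyc_opp t s k : (0 < t < N)%N -> (s < N)%N -> (N %| t * 2 ^ k + s)%N ->
  (w2 t + w2 s)%N = m.
Proof.
move=> /andP [t0 tN] sN hdvd; set u := (t * 2 ^ k %% N)%N.
have wu : w2 u = w2 t by rewrite /u w2_rot.
have uN : (u < N)%N by rewrite /u ltn_mod; lia.
have u0 : (0 < u)%N.
  by rewrite lt0n; apply/eqP => u0; move: (w2_gt0 t0); rewrite -wu u0 w2_0.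
have /dvdnP [q hq] : (N %| u + s)%N by rewrite /dvdn /u modnDml.
have us : (s = 2 ^ m - 1 - u)%N by case: q hq => [|[|q]]; rewrite ?mulSn; lia.
by rewrite -wu us w2_add_compl //; lia.
Qed.

Lemma cyc_refl (i : 'I_N) : i \in cyc N i.
Proof. by apply/cycP; exists 0%N; rewrite expn0 muln1 modn_small. Qed.

Lemma cyc_trans (j i : 'I_N) k : j \in cyc N i -> i \in cyc N k -> j \in cyc N k.
Proof.
by move=> /cycP [a ha] /cycP [b hb]; apply/cycP; exists (b + a)%N; apply: rot_trans ha hb.
Qed.

Lemma cyc_sym (j i : 'I_N) : j \in cyc N i -> i \in cyc N j.
Proof. by move=> /cycP [a ha]; apply/cycP; exists (a * m - a)%N; apply: rot_sym. Qed.

Lemma cyc_w2 (j : 'I_N) s : (s < N)%N -> j \in cyc N s -> w2 j = w2 s.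
Proof. by move=> sN /cycP [a ->]; rewrite w2_rot. Qed.

Definition leader (i : 'I_N) : 'I_N := [arg min_(j < i | j \in cyc N i) (j : nat)].

Lemma leader_spec i :
  leader i \in cyc N i /\ forall j : 'I_N, j \in cyc N i -> (leader i <= j)%N.
Proof. by rewrite /leader; case: arg_minnP; [exact: cyc_refl | move=> j h1 h2; split]. Qed.

Lemma leader_coset_leader i : coset_leader (leader i).
Proof.
have [h1 h2] := leader_spec i.
by apply/forallP => j; apply/implyP => hj; apply: h2; apply: cyc_trans hj h1.
Qed.

Lemma leader_eq (s i : 'I_N) : coset_leader s -> i \in cyc N s -> leader i = s.
Proof.
move=> /forallP hs his; have [h1 h2] := leader_spec i.
apply/val_inj/eqP; rewrite eqn_leq h2 /=; last exact: cyc_sym.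
by have := hs (leader i); rewrite (cyc_trans h1 his).
Qed.

Lemma cyc_leader i : i \in cyc N (leader i).
Proof. by have [h1 _] := leader_spec i; apply: cyc_sym. Qed.

Lemma rot_of_dvd_opp i s k : (i <= N)%N -> (s < N)%N -> (N %| (N - i) * 2 ^ k + s)%N ->
  s = (i * 2 ^ k %% N)%N.
Proof.
move=> iN sN /dvdnP [q hq].
have : ((N - i) * 2 ^ k + s + i * 2 ^ k = q * N + i * 2 ^ k)%N by rewrite hq.
rewrite addnAC -mulnDl subnK // mulnC => e.
by rewrite -(modn_small sN) -(modnMDl (2 ^ k) s) e modnMDl.
Qed.

(* The two set bits of the rotation sit at f and f + r (mod m), which cannot both lie below
   m - r when m - r <= r. *)
Lemma rot_1_add_exp2_ge r f : (3 <= m)%N -> (r < m)%N -> (m <= r.*2)%N ->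
  (2 ^ (m - r) <= (1 + 2 ^ r) * 2 ^ f %% N)%N.
Proof.
move=> m3 rm mr; rewrite rot_modm.
have : (f %% m < m)%N by rewrite ltn_mod; lia.
move: (f %% m) => {}f fm; set Q := (2 ^ (m - 2))%N.
have eQ : (2 ^ m = 4 * Q)%N by rewrite /Q -(expnD 2 2) subnKC //; lia.
have Q2 : (2 <= Q)%N by rewrite /Q -{1}(expn1 2) leq_exp2l //; lia.
have e2 : (2 ^ (m - r) <= 2 ^ r)%N by rewrite leq_exp2l //; lia.
rewrite mulnDl mul1n -expnD (addnC r f).
case: (ltnP (f + r) m) => hfr.
  have h1 : (2 ^ f <= Q)%N by rewrite leq_exp2l //; lia.
  have h2 : (2 ^ (f + r) <= 2 * Q)%N by rewrite /Q -(expnD 2 1) leq_exp2l //; lia.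
  have h3 : (2 ^ r <= 2 ^ (f + r))%N by rewrite leq_exp2l //; lia.
  by rewrite modn_small; lia.
have eg : (f + r = m + (f + r - m))%N by lia.
set g := (f + r - m)%N in eg.
have h1 : (2 ^ f <= 2 * Q)%N by rewrite /Q -(expnD 2 1) leq_exp2l //; lia.
have h2 : (2 ^ g <= Q)%N by rewrite leq_exp2l //; lia.
have h3 : (2 ^ (m - r) <= 2 ^ f)%N by rewrite leq_exp2l //; lia.
rewrite eg expnD.
have -> : (2 ^ f + 2 ^ m * 2 ^ g = 2 ^ g * N + (2 ^ g + 2 ^ f))%N.
  rewrite mulnBr muln1 (mulnC (2 ^ g)).
  have : (2 ^ g <= 2 ^ m * 2 ^ g)%N by rewrite leq_pmull ?expn_gt0.
  lia.
by rewrite modnMDl modn_small; lia.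
Qed.

End Cyclotomic.

Import GRing.Theory.
Local Open Scope ring_scope.

Section F2Embedding.
Variable F : fieldType.
Hypothesis pchar2 : 2%N \in [pchar F].

Definition of_F2 (b : 'F_2) : F := (nat_of_ord b)%:R.
Definition to_F2 (y : F) : 'F_2 := if y == 1 then 1 else 0.

Lemma of_F2D a b : of_F2 (a + b) = of_F2 a + of_F2 b.
Proof.
rewrite /of_F2; case: a b => [[|[|a]] ha] [[|[|b]] hb] //=; rewrite ?add0r ?addr0 //.
by rewrite -natrD (pcharf0 pchar2).
Qed.

Lemma of_F2M a b : of_F2 (a * b) = of_F2 a * of_F2 b.
Proof. by rewrite /of_F2; case: a b => [[|[|a]] ha] [[|[|b]] hb] //=; rewrite ?mul0r ?mul1r. Qed.

Lemma of_F2_sum I (r : seq I) (P : pred I) (G : I -> 'F_2) :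
  of_F2 (\sum_(i <- r | P i) G i) = \sum_(i <- r | P i) of_F2 (G i).
Proof. exact: (big_morph of_F2 of_F2D). Qed.

Lemma of_F2_idem b : of_F2 b ^+ 2 = of_F2 b.
Proof. by rewrite /of_F2; case: b => [[|[|b]] hb] //=; rewrite ?expr0n ?expr1n. Qed.

Lemma to_F2K y : y ^+ 2 = y -> of_F2 (to_F2 y) = y.
Proof.
move=> hy; rewrite /to_F2; case: eqP => [->|ne] //.
have : y * (y - 1) == 0 by rewrite mulrBr mulr1 -expr2 hy subrr.
by rewrite mulf_eq0 subr_eq0 => /orP [/eqP ->|/eqP].
Qed.

End F2Embedding.
Arguments of_F2 {F} b.

Section Trace.
Variables (F : finFieldType) (m : nat) (alpha : F).
Hypotheses (m2 : (2 <= m)%N) (hF : #|F| = (2 ^ m)%N).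
Local Notation N := (2 ^ m - 1)%N.
Hypothesis halpha : N.-primitive_root alpha.

Lemma pchar2 : 2%N \in [pchar F].
Proof. exact: (card_finPcharP hF). Qed.

Definition Tr (y : F) : F := \sum_(k < m) y ^+ (2 ^ k).

Lemma Tr_add x y : Tr (x + y) = Tr x + Tr y.
Proof.
rewrite /Tr -big_split; apply: eq_bigr => k _; apply: exprDn_pchar.
by rewrite (eq_pnat _ (pcharf_eq pchar2)) pnatX pnat_id.
Qed.

Lemma Tr0 : Tr 0 = 0.
Proof. by rewrite /Tr big1 // => k _; rewrite expr0n expn_eq0. Qed.

Lemma Tr_sum I (r : seq I) (P : pred I) (G : I -> F) :
  Tr (\sum_(i <- r | P i) G i) = \sum_(i <- r | P i) Tr (G i).
Proof. exact: (big_morph Tr Tr_add Tr0). Qed.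

(* Squaring shifts the summands y^(2^k) cyclically, since y^(2^m) = y^#|F| = y. *)
Lemma Tr_idem y : Tr y ^+ 2 = Tr y.
Proof.
rewrite -(pFrobenius_autE pchar2) /Tr rmorph_sum.
have [m' em] : exists m', m = m'.+1 by exists m.-1; rewrite prednK //; lia.
move: hF; rewrite em => hF'.
rewrite big_ord_recr big_ord_recl /= pFrobenius_autE -exprM -expnSr -hF' expf_card addrC.
by congr (_ + _); apply: eq_bigr => k _; rewrite pFrobenius_autE -exprM -expnSr.
Qed.

Lemma Tr_scale b y : b ^+ 2 = b -> Tr (b * y) = b * Tr y.
Proof.
move=> hb; rewrite /Tr mulr_sumr; apply: eq_bigr => k _; rewrite exprMn; congr (_ * _).
by elim: (k : nat) => [|j IH]; rewrite ?expr1 // expnSr exprM IH.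
Qed.

Lemma lin_poly_nonroot (K : pred 'I_m) k0 : K k0 ->
  exists a : F, \sum_(k < m | K k) a ^+ (2 ^ k) != 0.
Proof.
move=> Kk0; apply/existsP; apply: contraT; rewrite negb_exists => /forallP hall.
pose P : {poly F} := \sum_(k < m | K k) 'X^(2 ^ k).
have P0 : P != 0.
  apply/eqP => /(congr1 (fun q : {poly F} => q`_(2 ^ k0))).
  rewrite coef0 /P coef_sum (bigD1 k0) //= coefXn eqxx big1 ?addr0.
    by move/eqP; rewrite oner_eq0.
  move=> k /andP [_ kk0]; rewrite coefXn eqn_exp2l //.
  by rewrite -[(k0 == k :> nat)]/(k0 == k) eq_sym (negbTE kk0).
have roots : all (root P) (enum F).
  apply/allP => a _; rewrite /root horner_sum -[_ == 0]negbK.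
  by under eq_bigr => k _ do rewrite hornerXn; apply: hall.
have := max_ring_poly_roots P0 roots; rewrite uniq_rootsE enum_uniq -cardE hF => /(_ isT).
have : (size P <= 2 ^ m)%N.
  apply: leq_trans (size_sum _ _ _) _; apply/bigmax_leqP => k _.
  by rewrite size_polyXn ltn_exp2l.
by move=> h1 h2; have := leq_trans h2 h1; rewrite ltnn.
Qed.

Lemma Tr_mul_nondeg y : y != 0 -> exists a, Tr (a * y) != 0.
Proof.
move=> y0; have m0 : (0 < m)%N by lia.
have [b hb] := lin_poly_nonroot (K := predT) (k0 := Ordinal m0) isT.
by exists (b / y); rewrite divfK.
Qed.

Lemma sum_prim_root_expr e : \sum_(x < N) (alpha ^+ e) ^+ x = if (N %| e)%N then 1 else 0.
Proof.
case: ifP => hd.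
  rewrite (prim_order_dvd halpha) in hd.
  rewrite (eq_bigr (fun _ => 1)) => [|x _]; last by rewrite (eqP hd) expr1n.
  rewrite sumr_const card_ord -(GRing.natr_mod_pchar pchar2).
  suff -> : (N %% 2 = 1)%N by [].
  have -> : (N = 1 + (2 ^ m.-1 - 1) * 2)%N.
    have : (2 ^ m = 2 * 2 ^ m.-1)%N by rewrite -expnS prednK //; lia.
    by have := expn_gt0 2 m.-1; lia.
  by rewrite addnC modnMDl.
set z := alpha ^+ e.
have zN : z ^+ N = 1 by rewrite /z -exprM mulnC exprM (prim_expr_order halpha) expr1n.
have z1 : z - 1 != 0 by rewrite subr_eq0 /z -(prim_order_dvd halpha) hd.
have := subrX1 z N; rewrite zN subrr => /esym /eqP; rewrite mulf_eq0 (negbTE z1) /=.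
by move/eqP.
Qed.

Lemma wpoly_horner (c : word N) z : (wpoly F c).[z] = \sum_(i < N) of_F2 (c 0 i) * z ^+ i.
Proof. by rewrite /wpoly horner_sum; apply: eq_bigr => i _; rewrite hornerZ hornerXn. Qed.

Definition trace_word (a : F) (t : nat) : word N :=
  \row_(x < N) to_F2 (Tr (a * alpha ^+ (t * x))).

Lemma trace_word_eval a t s : (wpoly F (trace_word a t)).[alpha ^+ s] =
  \sum_(k < m | (N %| t * 2 ^ k + s)%N) a ^+ (2 ^ k).
Proof.
rewrite wpoly_horner.
transitivity (\sum_(x < N) \sum_(k < m) a ^+ (2 ^ k) * (alpha ^+ (t * 2 ^ k + s)) ^+ x).
  apply: eq_bigr => x _; rewrite mxE to_F2K ?Tr_idem // /Tr mulr_suml.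
  apply: eq_bigr => k _; rewrite exprMn -!exprM -mulrA -exprD.
  by congr (_ * alpha ^+ _); rewrite mulnDl mulnAC.
rewrite exchange_big /= [RHS]big_mkcond; apply: eq_bigr => k _.
by rewrite -mulr_sumr sum_prim_root_expr; case: ifP; rewrite ?mulr1 ?mulr0.
Qed.

Lemma trace_word_root a t s : (forall k : 'I_m, ~~ (N %| t * 2 ^ k + s)%N) ->
  root (wpoly F (trace_word a t)) (alpha ^+ s).
Proof. by move=> h; rewrite /root trace_word_eval big_pred0 // => k; apply/negbTE. Qed.

Lemma trace_word_dot (c : word N) a t :
  of_F2 (\sum_(x < N) c 0 x * trace_word a t 0 x) = Tr (a * (wpoly F c).[alpha ^+ t]).
Proof.
rewrite (of_F2_sum pchar2) wpoly_horner mulr_sumr Tr_sum; apply: eq_bigr => x _.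
by rewrite of_F2M mxE to_F2K ?Tr_idem // -exprM mulrCA [RHS]Tr_scale ?of_F2_idem.
Qed.

Lemma root_prod_XsubC_expr (P : pred 'I_N) (i : 'I_N) :
  P i -> root (\prod_(j | P j) ('X - (alpha ^+ j)%:P)) (alpha ^+ i).
Proof. by move=> Pi; rewrite (bigD1 i) //= rootM root_XsubC eqxx. Qed.

Lemma prod_XsubC_expr_dvdp (P : pred 'I_N) p :
  (forall i : 'I_N, P i -> root p (alpha ^+ i)) -> \prod_(i | P i) ('X - (alpha ^+ i)%:P) %| p.
Proof.
move=> hP; rewrite -big_enum /=.
rewrite -(big_map (fun i : 'I_N => alpha ^+ i) xpredT (fun z => 'X - z%:P)).
apply: uniq_roots_dvdp.
  by apply/allP => z /mapP [i]; rewrite mem_enum => Pi ->; apply: hP.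
rewrite uniq_rootsE map_inj_in_uniq ?enum_uniq // => i j _ _ /eqP.
by rewrite (eq_prim_root_expr halpha) !modn_small // => /eqP /val_inj.
Qed.

Lemma RM_genE r : RM_gen alpha r m =
  \prod_(i : 'I_N | (1 <= w2 i <= m - r - 1)%N) ('X - (alpha ^+ i)%:P).
Proof.
rewrite /RM_gen /minpolyM; symmetry.
rewrite (partition_big (@leader m) (fun s : 'I_N => coset_leader s && (1 <= w2 s <= m - r - 1)%N)).
  apply: eq_bigr => s /andP [hs hw]; apply: eq_bigl => i.
  apply/idP/idP => [/andP [_ /eqP <-]|his]; first exact: cyc_leader.
  by rewrite (leader_eq m2 hs his) eqxx andbT (cyc_w2 m2 (ltn_ord s) his).
by move=> i hi; rewrite leader_coset_leader //= -(cyc_w2 m2 (ltn_ord _) (cyc_leader m2 i)).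
Qed.

Lemma trace_word_in_RM r a (t : 'I_N) : ((m - r - 1).*2 < m)%N ->
  (1 <= w2 t <= m - r - 1)%N -> trace_word a t \in punctured_RM alpha r m.
Proof.
move=> hr /andP [t1 t2]; rewrite inE RM_genE.
apply: prod_XsubC_expr_dvdp => s /andP [s1 s2]; apply: trace_word_root => k.
have t0 : (0 < t < N)%N by rewrite ltn_ord andbT lt0n; apply: contraTneq t1 => ->; rewrite w2_0.
by apply/negP => /(w2_cyc_opp m2 t0 (ltn_ord s)); lia.
Qed.

Lemma dual_RM_sub_RM r : ((m - r - 1).*2 < m)%N ->
  dual_code (punctured_RM alpha r m) \subset punctured_RM alpha r m.
Proof.
move=> hr; apply/subsetP => c; rewrite inE => /forallP hc.
rewrite inE RM_genE; apply: prod_XsubC_expr_dvdp => t ht.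
apply/rootP/eqP/negbNE/negP => /Tr_mul_nondeg [a /eqP]; apply.
have /eqP /(congr1 (@of_F2 F)) := implyP (hc _) (trace_word_in_RM a hr ht).
by rewrite trace_word_dot.
Qed.

Lemma RM_sub_BCH r : punctured_RM alpha r m \subset BCH_code alpha N (2 ^ (m - r) - 1).
Proof.
apply/subsetP => c; rewrite !inE RM_genE; apply: dvdp_trans.
apply: prod_XsubC_expr_dvdp => i /existsP [j hj]; apply: root_prod_XsubC_expr.
have jr : (1 + j < 2 ^ (m - r) - 1)%N by have := ltn_ord j; lia.
have jN : (1 + j < N)%N by apply: leq_trans jr _; rewrite leq_sub2r // leq_exp2l // leq_subr.
have := @w2_add_compl (m - r) (1 + j); rewrite (cyc_w2 m2 jN hj).
have := @w2_gt0 (2 ^ (m - r) - 1 - (1 + j)); have := @w2_gt0 (1 + j); lia.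
Qed.

Lemma BCH_RM_witness r : (m <= r.*2)%N -> (r < m - 2)%N ->
  exists2 c, c \in BCH_code alpha N (2 ^ (m - r) - 1) & c \notin punctured_RM alpha r m.
Proof.
move=> hmr hrm; set i0 := (1 + 2 ^ r)%N.
have i0N : (i0 < N)%N.
  have : (2 ^ r.+2 <= 2 ^ m)%N by rewrite leq_exp2l //; lia.
  by rewrite /i0 !expnS; have := expn_gt0 2 r; lia.
have w2i0 : w2 i0 = 2%N.
  rewrite /i0 addnC -[X in (X + 1)%N]muln1 w2_shift_add ?w2_1 //.
  by rewrite -{1}(expn0 2) ltn_exp2l; lia.
have m0 : (0 < m)%N by lia.
pose K := fun k : 'I_m => (N %| (N - i0) * 2 ^ k + i0)%N.
have [a ha] : exists a : F, \sum_(k < m | K k) a ^+ (2 ^ k) != 0.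
  apply: (lin_poly_nonroot (K := K) (k0 := Ordinal m0)).
  by rewrite /K /= muln1 subnK ?dvdnn // ltnW.
exists (trace_word a (N - i0)).
  rewrite inE; apply: prod_XsubC_expr_dvdp => s /existsP [j hj]; apply: trace_word_root => k.
  apply/negP => /(rot_of_dvd_opp (ltnW i0N) (ltn_ord s)) hs.
  have jr : (1 + j < 2 ^ (m - r) - 1)%N by have := ltn_ord j; lia.
  have jN : (1 + j < N)%N by apply: leq_trans jr _; rewrite leq_sub2r // leq_exp2l // leq_subr.
  move/(cycP m2): hj => [e /(rot_sym m2 jN) /rot_trans /(_ hs) hj].
  have m3 : (3 <= m)%N by lia.
  have rm : (r < m)%N by lia.
  by have := rot_1_add_exp2_ge m2 (k + (e * m - e)) m3 rm hmr; rewrite -hj; lia.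
have hi0 : (1 <= w2 (Ordinal i0N) <= m - r - 1)%N by rewrite /= w2i0; lia.
rewrite inE RM_genE; apply/negP => /root_dvdp /(_ (root_prod_XsubC_expr hi0)).
by rewrite /root trace_word_eval (negbTE ha).
Qed.

End Trace.

Theorem lemma3 (m r : nat) (F : finFieldType) (alpha : F)
  (hm : (7 <= m)%N) (hr1 : (uphalf m < r)%N) (hr2 : (r < m - 2)%N)
  (hF : #|F| = (2 ^ m)%N)
  (halpha : (2 ^ m - 1).-primitive_root alpha) :
  dual_code (punctured_RM alpha r m) \subset punctured_RM alpha r m /\
  punctured_RM alpha r m \proper BCH_code alpha (2 ^ m - 1) (2 ^ (m - r) - 1).
Proof.
have m2 : (2 <= m)%N by lia.
move: hr1; rewrite ltn_uphalf_double => hr1.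
split; first by apply: dual_RM_sub_RM => //; lia.
apply/properP; split; first exact: RM_sub_BCH.
by apply: BCH_RM_witness => //; lia.
Qed.
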